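(* Let $n\ge 1$ and $1\le k\le n+1$ be integers, let $q$ be a prime power, and let $T$ be a hereditary property of families. If every family $\mathcal{F}\subseteq 2^{[n]}$ satisfying $T$ has at most $\Sigma(n,k)$ members, then every family of subspaces of $\mathbb{F}_q^n$ with property $T$ has at most $\Sigma_q(n,k)$ members.
   Context: $[n]=\{1,\dots,n\}$ and $2^{[n]}$ is the family of all its subsets. $\mathbb{F}_q^n$ is the $n$-dimensional vector space over the field with $q$ elements. A property $T$ of families is a property that makes sense for families of members of any lattice (such as $2^{[n]}$ ordered by inclusion, or the subspaces of $\mathbb{F}_q^n$ ordered by inclusion), defined in terms of the inclusion/intersection structure of the family, so that it is preserved by injective maps preserving inclusion, intersection and span/union (e.g. properties defined by forbidding inclusion patterns); it is hereditary if every subfamily of a family with property $T$ also has property $T$. $\Sigma(n,k)=\sum_{i=1}^k\binom{n}{\lfloor\frac{n-k}{2}\rfloor+i}$ is the total size of the $k$ middle levels of $2^{[n]}$, and $\Sigma_q(n,k)=\sum_{i=1}^k{n \brack \lfloor\frac{n-k}{2}\rfloor+i}_q$, where ${n\brack j}_q=\frac{(q^n-1)(q^{n-1}-1)\cdots(q^{n-j+1}-1)}{(q^j-1)(q^{j-1}-1)\cdots(q-1)}$ is the number of $j$-dimensional subspaces of $\mathbb{F}_q^n$. *)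

From HB Require Import structures.
From mathcomp Require Import all_boot all_order all_algebra.
Set Implicit Arguments. Unset Strict Implicit. Unset Printing Implicit Defensive.

Definition is_lattice (L : Type) (m j : L -> L -> L) : Prop :=
  [/\ (forall x y, m x y = m y x), (forall x y, j x y = j y x),
      (forall x y z, m x (m y z) = m (m x y) z),
      (forall x y z, j x (j y z) = j (j x y) z)
    & (forall x y, m x (j x y) = x) /\ (forall x y, j x (m x y) = x)].

Definition family_property : Type :=
  forall (L : finType), (L -> L -> L) -> (L -> L -> L) -> {set L} -> Prop.

(* T depends only on the inclusion/intersection/union structure: it is
   preserved (in both directions) by injective maps preserving meet and
   join (hence inclusion). *)
Definition lattice_invariant (T : family_property) : Prop :=
  forall (L1 L2 : finType) (m1 j1 : L1 -> L1 -> L1) (m2 j2 : L2 -> L2 -> L2)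
         (f : L1 -> L2),
    is_lattice m1 j1 -> is_lattice m2 j2 -> injective f ->
    (forall x y, f (m1 x y) = m2 (f x) (f y)) ->
    (forall x y, f (j1 x y) = j2 (f x) (f y)) ->
    forall A : {set L1}, T L1 m1 j1 A <-> T L2 m2 j2 (f @: A).

Definition hereditary (T : family_property) : Prop :=
  forall (L : finType) (m j : L -> L -> L), is_lattice m j ->
    forall A B : {set L}, B \subset A -> T L m j A -> T L m j B.

(* Sigma(n,k) = sum_{i=1}^k C(n, floor((n-k)/2) + i).  For 1 <= i and
   k <= n+1 we have floor((n-k)/2) + i = (n + 2i - k)/2 with n + 2i - k >= 1,
   which avoids negative numbers (k = n+1 gives floor(-1/2) = -1). *)
Definition Sigma (n k : nat) : nat :=
  \sum_(1 <= i < k.+1) 'C(n, (n + 2 * i - k)./2).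

(* Gaussian binomial [n choose j]_q (an exact division in nat). *)
Definition qbinom (q n j : nat) : nat :=
  (\prod_(t < j) (q ^ (n - t) - 1)) %/ (\prod_(t < j) (q ^ (j - t) - 1)).

Definition Sigma_q (q n k : nat) : nat :=
  \sum_(1 <= i < k.+1) qbinom q n ((n + 2 * i - k)./2).

Import VectorInternalTheory.
HB.instance Definition _ (K : finFieldType) (vT : vectType K) :=
  [Countable of {vspace vT} by <:].
HB.instance Definition _ (K : finFieldType) (vT : vectType K) :=
  [Finite of {vspace vT} by <:].

From HB Require Import structures.
From mathcomp Require Import all_boot all_order all_algebra zify ring.

Set Implicit Arguments.
Unset Strict Implicit.
Unset Printing Implicit Defensive.

Import Order.TTheory GRing.Theory Num.Theory VectorInternalTheory.

(* An invertible d x d matrix M is a basis of vT, and S |-> the span of the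
   basis vectors indexed by S embeds the Boolean lattice of subsets of [d]
   into the subspace lattice, preserving meets, joins, and sending #|S| to the
   dimension.  Pulling a family G with property T back along each embedding
   gives a family of sets with property T, hence of size at most Sigma(d,k).
   Summing over all M counts each subspace V with multiplicity nadapted V,
   which only depends on j = dim V and is proportional to C(d,j) / [d j]_q.
   This ratio is smallest on the k middle levels, so G has weight at most
   that of the union H of the k middle levels, and an exchange argument
   between G and H gives #|G| <= #|H| = Sigma_q(d,k). *)

Lemma card_le_of_weighted_sum (T : finType) (w : T -> nat) (A B : {set T}) :
    (forall x, 0 < w x) -> {in B & [predC B], forall x y, w x <= w y} ->
  \sum_(x in A) w x <= \sum_(x in B) w x -> #|A| <= #|B|.
Proof.
move=> w_gt0 wB sumAB.
rewrite -(cardsID B A) -(cardsID A B) setIC leq_add2l.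
set X := \sum_(x in A :\: B) w x; set Y := \sum_(y in B :\: A) w y.
have leXY : X <= Y.
  by move: sumAB; rewrite (big_setID B) [leqRHS](big_setID A) setIC leq_add2l.
have cross : #|A :\: B| * Y <= #|B :\: A| * X.
  rewrite -sum_nat_const [leqRHS]mulnC big_distrl /=.
  apply: leq_sum => x; rewrite inE => /andP[xNB _].
  rewrite mulnC -sum_nat_const; apply: leq_sum => y; rewrite inE => /andP[_ yB].
  exact: wB.
have [->//|/card_gt0P[x0 x0AB]] := posnP #|A :\: B|.
have X_gt0 : 0 < X by rewrite /X (bigD1 x0) //= ltn_addr.
rewrite -(leq_pmul2r (leq_trans X_gt0 leXY)) (leq_trans cross) //.
by rewrite leq_mul2l leXY orbT.
Qed.

Lemma sum_by_level (T : finType) (h f : T -> nat) lo hi :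
  \sum_(x | lo <= h x < hi) f x = \sum_(lo <= j < hi) \sum_(x | h x == j) f x.
Proof.
elim: hi => [|hi IH]; first by rewrite big_geq // big_pred0 // => x; rewrite ltn0 andbF.
have [le_lo_hi|lt_hi_lo] := leqP lo hi; last first.
  by rewrite big_geq // big_pred0 // => x; apply/negbTE; lia.
rewrite big_nat_recr //= -IH (bigID (fun x => h x == hi)) /= addnC.
by congr (_ + _); apply: eq_bigl => x; case: eqVneq => [->|]; lia.
Qed.

Lemma sum_middle_levels_index (g : nat -> nat) (d k : nat) : 1 <= k <= d.+1 ->
  \sum_(1 <= i < k.+1) g ((d + 2 * i - k)./2) =
  \sum_((d + 2 - k)./2 <= j < (d + 2 - k)./2 + k) g j.
Proof.
case/andP => k_gt0 le_kd; rewrite big_add1 /= -{1}[(d + 2 - k)./2]add0n big_addn addKn.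
by apply: eq_big_nat => i /andP[_ lt_ik]; congr g; lia.
Qed.

Lemma leq_mul_expn_sub1 (q a b : nat) : 0 < q -> b <= a ->
  a * (q ^ b - 1) <= b * (q ^ a - 1).
Proof.
move=> q_gt0 le_ba; rewrite !subn1 !predn_exp mulnCA [b * _]mulnCA leq_mul2l.
apply/orP; right; elim: a le_ba => [|a IHa] le_ba.
  by rewrite leqn0 in le_ba; rewrite (eqP le_ba).
have [->//|lt_ba] := eqVneq b a.+1.
have {lt_ba}le_ba : b <= a by rewrite -ltnS ltn_neqAle lt_ba.
have geo_le : \sum_(i < b) q ^ i <= b * q ^ a.
  rewrite -[b in b * _]card_ord -sum_nat_const; apply: leq_sum => i _.
  by rewrite leq_pexp2l // (leq_trans (ltnW (ltn_ord i))).
by rewrite big_ord_recr /= mulSn mulnDr addnC leq_add ?IHa.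
Qed.

Definition qprod (q n j : nat) : nat := \prod_(t < j) (q ^ (n - t) - 1).

Section GaussianBinomial.

Variables (q d : nat).
Hypothesis q_gt1 : 1 < q.

Lemma expn_sub1_gt0 e : 0 < e -> 0 < q ^ e - 1.
Proof. by move=> e_gt0; rewrite subn_gt0 -{1}(expn0 q) ltn_exp2l. Qed.

Lemma qprod_gt0 n j : j <= n -> 0 < qprod q n j.
Proof.
move=> le_jn; rewrite prodn_gt0 // => t; apply: expn_sub1_gt0.
by rewrite subn_gt0 (leq_trans (ltn_ord t)).
Qed.

Lemma qprod_diagS j : qprod q j.+1 j.+1 = (q ^ j.+1 - 1) * qprod q j j.
Proof. by rewrite /qprod big_ord_recl subn0. Qed.

(* Always true; it is derived below by counting subspaces over a finite field. *)
Hypothesis qprod_dvd : forall j, j <= d -> qprod q j j %| qprod q d j.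

Lemma qbinomK j : j <= d -> qbinom q d j * qprod q j j = qprod q d j.
Proof. by move/qprod_dvd/divnK. Qed.

Lemma qbinom_gt0 j : j <= d -> 0 < qbinom q d j.
Proof. by move=> le_jd; have := qprod_gt0 le_jd; rewrite -(qbinomK le_jd) muln_gt0 => /andP[]. Qed.

Lemma qbinomS j : j < d ->
  qbinom q d j.+1 * (q ^ j.+1 - 1) = qbinom q d j * (q ^ (d - j) - 1).
Proof.
move=> lt_jd; apply/eqP; rewrite -(eqn_pmul2r (qprod_gt0 (leqnn j))) -mulnA.
rewrite mulnAC -qprod_diagS qbinomK // qbinomK ?(ltnW lt_jd) //.
by rewrite /qprod big_ord_recr.
Qed.

Lemma qbinom_sym j : j <= d -> qbinom q d (d - j) = qbinom q d j.
Proof.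
elim: j => [_|j IHj lt_jd].
  by rewrite subn0 /qbinom !big_ord0 divnn qprod_gt0.
have /qbinomS := lt_jd; rewrite -IHj ?(ltnW lt_jd) //.
have /qbinomS : d - j.+1 < d by lia.
rewrite subnSK // subKn ?(ltnW lt_jd) // => -> /eqP.
by rewrite mulnC [_ * (_ - 1)]mulnC eqn_pmul2l ?expn_sub1_gt0 // => /eqP.
Qed.

Local Open Scope ring_scope.

(* Proportional to the number of bases adapted to a j-dimensional subspace. *)
Definition binom_ratio j : rat := 'C(d, j)%:R / (qbinom q d j)%:R.

Lemma binom_ratio_le i j : (i <= d)%N -> (j <= d)%N ->
  (binom_ratio i <= binom_ratio j) = ('C(d, i) * qbinom q d j <= 'C(d, j) * qbinom q d i)%N.
Proof.
move=> le_id le_jd; rewrite ler_pdivrMr ?ltr0n ?qbinom_gt0 // mulrAC.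
by rewrite ler_pdivlMr ?ltr0n ?qbinom_gt0 // -!natrM ler_nat.
Qed.

Lemma binom_ratio_sym j : (j <= d)%N -> binom_ratio (d - j) = binom_ratio j.
Proof. by move=> le_jd; rewrite /binom_ratio bin_sub // qbinom_sym. Qed.

Lemma binom_ratioS_le t : (2 * t + 1 <= d)%N -> binom_ratio t.+1 <= binom_ratio t.
Proof.
move=> le_td; have lt_td : (t < d)%N by lia.
rewrite binom_ratio_le //; last exact: ltnW.
have K_gt0 : (0 < t.+1 * (q ^ t.+1 - 1))%N by rewrite muln_gt0 expn_sub1_gt0.
rewrite -(leq_pmul2r K_gt0).
have -> : ('C(d, t.+1) * qbinom q d t * (t.+1 * (q ^ t.+1 - 1)) =
          'C(d, t) * qbinom q d t * ((d - t) * (q ^ t.+1 - 1)))%N.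
  by transitivity (t.+1 * 'C(d, t.+1) * (qbinom q d t * (q ^ t.+1 - 1)))%N;
    [ring | rewrite mul_bin_left; ring].
have -> : ('C(d, t) * qbinom q d t.+1 * (t.+1 * (q ^ t.+1 - 1)) =
          'C(d, t) * qbinom q d t * (t.+1 * (q ^ (d - t) - 1)))%N.
  by transitivity ('C(d, t) * t.+1 * (qbinom q d t.+1 * (q ^ t.+1 - 1)))%N;
    [ring | rewrite qbinomS //; ring].
by rewrite leq_mul2l leq_mul_expn_sub1 ?orbT //; lia.
Qed.

Lemma binom_ratio_le_half a b : (a <= b)%N -> (2 * b <= d + 1)%N ->
  binom_ratio b <= binom_ratio a.
Proof.
elim: b => [|b IHb] le_ab le_bd; first by rewrite leqn0 in le_ab; rewrite (eqP le_ab).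
have [->//|ne_ab] := eqVneq a b.+1.
by apply: le_trans (binom_ratioS_le _) (IHb _ _); lia.
Qed.

Lemma binom_ratio_le_minn i j : (i <= d)%N -> (j <= d)%N ->
  (minn i (d - i) <= minn j (d - j))%N -> binom_ratio j <= binom_ratio i.
Proof.
have ratio_minn x : (x <= d)%N -> binom_ratio (minn x (d - x)) = binom_ratio x.
  by move=> le_xd; case: leqP => _ //; rewrite binom_ratio_sym.
move=> le_id le_jd le_ij; rewrite -ratio_minn // -[binom_ratio i]ratio_minn //.
by apply: binom_ratio_le_half => //; lia.
Qed.

Lemma leq_binom_qbinom_minn i j : (i <= d)%N -> (j <= d)%N ->
    (minn i (d - i) <= minn j (d - j))%N ->
  ('C(d, j) * qbinom q d i <= 'C(d, i) * qbinom q d j)%N.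
Proof. by move=> le_id le_jd le_ij; rewrite -binom_ratio_le ?binom_ratio_le_minn. Qed.

End GaussianBinomial.

Section IndicatorMatrices.

Variables (F : fieldType) (d : nat).
Implicit Types S : {set 'I_d}.
Local Open Scope ring_scope.

Lemma capmxMunit m1 m2 n (A : 'M[F]_(m1, n)) (B : 'M[F]_(m2, n))
    (M : 'M[F]_n) :
  M \in unitmx -> (A *m M :&: B *m M == (A :&: B) *m M)%MS.
Proof.
move=> uM; rewrite capmxMr andbT; set X := (_ :&: _)%MS.
have subMV m (C : 'M[F]_(m, n)) : (X <= C *m M)%MS -> (X *m invmx M <= C)%MS.
  by move=> /(submxMr (invmx M)); rewrite mulmxK.
by rewrite -[X](mulmxKV uM) submxMr // sub_capmx !subMV ?capmxSl ?capmxSr.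
Qed.

Definition diag_ind S : 'M[F]_d := diag_mx (\row_i (i \in S)%:R).

Lemma mul_diag_ind S S' : diag_ind S *m diag_ind S' = diag_ind (S :&: S').
Proof.
apply/matrixP => i j; rewrite mul_diag_mx !mxE inE.
by case: (i \in S); rewrite ?mul1r ?mul0r ?mul0rn.
Qed.

Lemma add_diag_ind S S' :
  diag_ind S + diag_ind S' = diag_ind (S :|: S') + diag_ind (S :&: S').
Proof.
apply/matrixP => i j; rewrite !mxE !inE.
by case: (i \in S); case: (i \in S'); rewrite /= ?add0r ?addr0 // addrC.
Qed.

Lemma diag_ind0 : diag_ind set0 = 0.
Proof. by apply/matrixP => i j; rewrite !mxE inE mul0rn. Qed.

Lemma diag_indT : diag_ind setT = 1%:M.
Proof. by rewrite -diag_const_mx; congr diag_mx; apply/rowP => i; rewrite !mxE inE. Qed.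

Lemma diag_ind_sum S : diag_ind S = \sum_(i in S) delta_mx i i.
Proof.
rewrite /diag_ind diag_mx_sum_delta [RHS]big_mkcond; apply: eq_bigr => i _.
by rewrite mxE; case: (i \in S); rewrite ?scale1r ?scale0r.
Qed.

Lemma rank_diag_ind S : \rank (diag_ind S) = #|S|.
Proof.
have rank_le X : (\rank (diag_ind X) <= #|X|)%N.
  rewrite diag_ind_sum -sum1_card.
  elim/big_rec2: _ => [|i r A _ IH]; first by rewrite mxrank0.
  by rewrite (leq_trans (mxrank_add _ _)) // mxrank_delta leq_add2l.
apply/eqP; rewrite eqn_leq rank_le -(leq_add2r #|~: S|) cardsC card_ord /=.
have sumSC : diag_ind S + diag_ind (~: S) = 1%:M.
  by rewrite add_diag_ind setUCr setICr diag_indT diag_ind0 addr0.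
apply: leq_trans (leq_add (leqnn _) (rank_le _)).
by rewrite -{1}(mxrank1 F d) -sumSC mxrank_add.
Qed.

Lemma submx_diag_ind m (Y : 'M[F]_(m, d)) S :
  (Y <= diag_ind S)%MS = (Y *m diag_ind S == Y).
Proof.
apply/idP/eqP => [/submxP[X ->]|<-]; last exact: submxMl.
by rewrite -mulmxA mul_diag_ind setIid.
Qed.

Lemma diag_ind_sub S S' : (diag_ind S <= diag_ind S')%MS = (S \subset S').
Proof.
rewrite submx_diag_ind mul_diag_ind; apply/eqP/idP => [eqSS'|/setIidPl -> //].
apply/subsetP => i Si; have /matrixP/(_ i i) := eqSS'.
rewrite !mxE !inE Si eqxx /= !mulr1n; case: (i \in S') => //= /eqP.
by rewrite eq_sym oner_eq0.
Qed.

Lemma cap_diag_ind S S' : (diag_ind S :&: diag_ind S' == diag_ind (S :&: S'))%MS.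
Proof.
rewrite sub_capmx !diag_ind_sub subsetIl subsetIr submx_diag_ind.
set X := (_ :&: _)%MS.
have XS : X *m diag_ind S = X by apply/eqP; rewrite -submx_diag_ind capmxSl.
have XS' : X *m diag_ind S' = X by apply/eqP; rewrite -submx_diag_ind capmxSr.
by rewrite -mul_diag_ind mulmxA XS XS' eqxx.
Qed.

Lemma adds_diag_ind S S' : (diag_ind S + diag_ind S' == diag_ind (S :|: S'))%MS.
Proof.
rewrite addsmx_sub !diag_ind_sub subsetUl subsetUr /=.
have -> : diag_ind (S :|: S') = diag_ind S + (1%:M - diag_ind S) *m diag_ind S'.
  by rewrite mulmxBl mul1mx mul_diag_ind addrA add_diag_ind addrK.
by rewrite addmx_sub_adds ?submxMl.
Qed.

Lemma pid_diag_ind r : pid_mx r = diag_ind [set i : 'I_d | (i < r)%N].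
Proof.
apply/matrixP => i j; rewrite !mxE inE.
case: (eqVneq i j) => [->|]; first by rewrite eqxx mulr1n.
by rewrite -val_eqE mulr0n => /negPf ->.
Qed.

End IndicatorMatrices.

Section SubbasisSpans.

Variables (F : fieldType) (vT : vectType F).
Local Notation d := (dim vT).
Implicit Types (M P : 'M[F]_d) (S : {set 'I_d}) (V : {vspace vT}).
Local Open Scope ring_scope.

Definition subbasis_span M S : {vspace vT} := mx2vs (diag_ind F S *m M).

Lemma eqmx_mx2vs m n (A : 'M[F]_(m, d)) (B : 'M[F]_(n, d)) :
  (A == B)%MS -> mx2vs A = mx2vs B :> {vspace vT}.
Proof. by move=> eqAB; apply: val_inj; apply/genmxP. Qed.

Lemma eq_mx2vs m (A : 'M[F]_(m, d)) V : (mx2vs A == V) = (A == vs2mx V)%MS.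
Proof.
apply/eqP/idP => [<-|eqAV]; first exact/eqmxP/eqmx_sym/mx2vsK.
by rewrite -[V]vs2mxK; apply: eqmx_mx2vs.
Qed.

Lemma subbasis_span_sub M S S' : M \in unitmx ->
  (subbasis_span M S <= subbasis_span M S')%VS = (S \subset S').
Proof.
move=> uM; have fM : row_free M by rewrite row_free_unit.
by rewrite -(diag_ind_sub F) -(submxMfree _ _ fM) /subsetv /= !genmxE.
Qed.

Lemma subbasis_span_inj M : M \in unitmx -> injective (subbasis_span M).
Proof.
move=> uM S S' eqSS'; apply/eqP; rewrite eqEsubset -!(subbasis_span_sub _ _ uM).
by rewrite eqSS' subvv.
Qed.

Lemma subbasis_spanI M S S' : M \in unitmx ->
  subbasis_span M (S :&: S') = (subbasis_span M S :&: subbasis_span M S')%VS.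
Proof.
move=> uM; apply: eqmx_mx2vs; apply/eqmxP.
apply: eqmx_trans (eqmxMr M (eqmx_sym (eqmxP (cap_diag_ind F S S')))) _.
apply: eqmx_trans (eqmx_sym (eqmxP (capmxMunit _ _ uM))) _.
exact: eqmx_sym (cap_eqmx (genmxE _) (genmxE _)).
Qed.

Lemma subbasis_spanU M S S' :
  subbasis_span M (S :|: S') = (subbasis_span M S + subbasis_span M S')%VS.
Proof.
apply: eqmx_mx2vs; apply/eqmxP.
apply: eqmx_trans (eqmxMr M (eqmx_sym (eqmxP (adds_diag_ind F S S')))) _.
apply: eqmx_trans (addsmxMr _ _ _) _.
exact: eqmx_sym (adds_eqmx (genmxE _) (genmxE _)).
Qed.

Lemma dim_subbasis_span M S : M \in unitmx -> \dim (subbasis_span M S) = #|S|.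
Proof. by move=> uM; rewrite /dimv genmxE mxrankMfree ?row_free_unit ?rank_diag_ind. Qed.

Lemma subbasis_spanMr M P S :
  subbasis_span (M *m P) S = mx2vs (vs2mx (subbasis_span M S) *m P).
Proof. by apply: eqmx_mx2vs; rewrite mulmxA; apply/eqmxP/eqmx_sym/eqmxMr/genmxE. Qed.

Lemma subbasis_span_ebase V :
  V = subbasis_span (row_ebase (vs2mx V)) [set i : 'I_d | (i < \dim V)%N].
Proof.
rewrite -[LHS]vs2mxK; apply: eqmx_mx2vs; rewrite -pid_diag_ind; apply/eqmxP.
rewrite -{1}(mulmx_ebase (vs2mx V)) -mulmxA; apply: eqmxMfull.
by rewrite row_full_unit col_ebase_unit.
Qed.

End SubbasisSpans.

Lemma setI_setU_lattice (T : finType) : is_lattice (@setI T) (@setU T).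
Proof.
split; [exact: setIC | exact: setUC | exact: setIA | exact: setUA |].
by split=> A B; [apply/setIidPl/subsetUl | apply/setUidPl/subsetIl].
Qed.

Lemma capv_addv_lattice (F : fieldType) (vT : vectType F) :
  is_lattice (@capv F vT) (@addv F vT).
Proof.
split; [exact: capvC | exact: addvC | exact: capvA | exact: addvA |].
by split=> U V; [apply/capv_idPl/addvSl | apply/addv_idPl/capvSl].
Qed.

Section AdaptedBases.

Variables (F : finFieldType) (vT : vectType F).
Local Notation d := (dim vT).
Local Notation GL := [set M : 'M[F]_d | M \in unitmx].
Implicit Types (M : 'M[F]_d) (S : {set 'I_d}) (V : {vspace vT}).

Definition adapted M V := (M \in unitmx) && [exists S, subbasis_span M S == V].

Definition nadapted V := #|[set M | adapted M V]|.

Lemma nadapted_gt0 V : 0 < nadapted V.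
Proof.
apply/card_gt0P; exists (row_ebase (vs2mx V)); rewrite inE /adapted row_ebase_unit /=.
by apply/existsP; exists [set i : 'I_d | (i < \dim V)%N]; rewrite -subbasis_span_ebase.
Qed.

Lemma nadapted_le M M' S : M \in unitmx -> M' \in unitmx ->
  nadapted (subbasis_span M S) <= nadapted (subbasis_span M' S).
Proof.
move=> uM uM'; set P := (invmx M *m M')%R.
have uP : P \in unitmx by rewrite unitmx_mul unitmx_inv uM.
have injP : injective (mulmx^~ P : 'M[F]_d -> 'M[F]_d) := can_inj (mulmxK uP).
rewrite /nadapted -(card_imset _ injP); apply/subset_leq_card/subsetP => _ /imsetP[N + ->].
rewrite !inE => /andP[uN /existsP[S0 /eqP eqNM]]; rewrite /adapted unitmx_mul uN uP /=.
apply/existsP; exists S0; rewrite subbasis_spanMr eqNM -subbasis_spanMr.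
by rewrite /P mulKVmx.
Qed.

Lemma nadapted_dim V V' : \dim V = \dim V' -> nadapted V = nadapted V'.
Proof.
move=> eq_dim; rewrite [V in LHS]subbasis_span_ebase [V' in RHS]subbasis_span_ebase eq_dim.
by apply/anti_leq; rewrite !nadapted_le ?row_ebase_unit.
Qed.

Lemma sum_nadapted (X : {set {vspace vT}}) :
  \sum_(V in X) nadapted V =
  \sum_(M in GL) #|[set S | subbasis_span M S \in X]|.
Proof.
transitivity (\sum_(V in X) \sum_(M in GL | [exists S, subbasis_span M S == V]) 1).
  by apply: eq_bigr => V _; rewrite /nadapted -sum1_card; apply: eq_bigl => M; rewrite !inE.
rewrite (exchange_big_dep (fun M : 'M[F]_d => M \in GL)) => [|V M _ /andP[] //].
apply: eq_bigr => M; rewrite inE => uM.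
rewrite -(card_imset _ (subbasis_span_inj uM)) -sum1_card; apply: eq_bigl => V.
rewrite uM.
apply/andP/imsetP => [[XV /existsP[S /eqP eqSV]]|[S XS ->]].
  by exists S; rewrite ?inE eqSV.
by rewrite inE in XS; split=> //; apply/existsP; exists S.
Qed.

Lemma sum_nadapted_dim j :
  \sum_(V in [set V | \dim V == j]) nadapted V = #|GL| * 'C(d, j).
Proof.
rewrite sum_nadapted -sum_nat_const; apply: eq_bigr => M; rewrite inE => uM.
rewrite -[X in 'C(X, _)]card_ord -card_draws; apply: eq_card => S.
by rewrite !inE dim_subbasis_span.
Qed.

Lemma card_dim_nadapted V :
  #|[set U : {vspace vT} | \dim U == \dim V]| * nadapted V = #|GL| * 'C(d, \dim V).
Proof.
rewrite -sum_nat_const -sum_nadapted_dim; apply: eq_bigr => U.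
by rewrite inE => /eqP eqUV; apply: nadapted_dim.
Qed.

End AdaptedBases.

Section CountingSubspaces.

Variables (F : finFieldType) (vT : vectType F).
Local Notation q := #|F|.
Local Notation d := (dim vT).

Lemma row_free_col_mx m n (v : 'rV[F]_n) (U : 'M[F]_(m, n)) :
  row_free (col_mx v U) = row_free U && ~~ (v <= U)%MS.
Proof.
rewrite /row_free; have -> : \rank (col_mx v U) = \rank (v + U)%MS by rewrite addsmxE.
have [vU|vNU] := boolP (v <= U)%MS.
  by rewrite andbF (addsmx_idPr vU) add1n ltn_eqF // ltnS rank_leq_row.
have capvU : (v :&: U)%MS = 0%R.
  apply/eqP; rewrite -mxrank_eq0 -leqn0 -ltnS (leq_trans _ (rank_leq_row v)) //.
  by rewrite (ltn_leqif (mxrank_leqif_sup (capmxSl v U))) sub_capmx submx_refl.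
have v_nz : v != 0%R by apply: contraNneq vNU => ->; rewrite sub0mx.
by rewrite mxrank_disjoint_sum // rank_rV v_nz add1n eqSS andbT.
Qed.

Lemma card_rV_sub m n (U : 'M[F]_(m, n)) :
  row_free U -> #|[set v : 'rV_n | (v <= U)%MS]| = q ^ m.
Proof.
move=> freeU; have [U' UU'] := row_freeP freeU.
have injU : injective (mulmx^~ U : 'rV_m -> 'rV_n).
  by apply: (can_inj (g := mulmx^~ U')) => w; rewrite -mulmxA UU' mulmx1.
have -> : q ^ m = #|[set: 'rV[F]_m]| by rewrite cardsT card_mx mul1n.
rewrite -(card_imset _ injU); apply: eq_card => v; rewrite inE.
by apply/submxP/imsetP => -[w]; exists w.
Qed.

Lemma card_row_free m n : m <= n ->
  #|[set A : 'M[F]_(m, n) | row_free A]| = \prod_(t < m) (q ^ n - q ^ t).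
Proof.
elim: m => [_|m IHm lt_mn].
  rewrite big_ord0 -[RHS](card_mx F 0 n); apply: eq_card => A.
  by rewrite !inE /row_free -leqn0 rank_leq_row.
rewrite big_ord_recr /= -IHm; last exact: ltnW.
rewrite -sum_nat_const -sum1_card.
rewrite (partition_big (@dsubmx F 1 m n) [in [set U | row_free U]]) => [|A]; last first.
  by rewrite !inE -{1}[A]vsubmxK row_free_col_mx => /andP[].
apply: eq_bigr => U; rewrite inE => freeU.
rewrite (reindex (col_mx^~ U)) /=; last first.
  by exists usubmx => [v _|A /andP[_ /eqP <-]]; rewrite ?col_mxKu ?vsubmxK.
rewrite sum1dep_card.
have -> : [set v | col_mx v U \in [set A | row_free A] & dsubmx (col_mx v U) == U] =
          ~: [set v : 'rV_n | (v <= U)%MS].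
  by apply/setP => v; rewrite !inE row_free_col_mx col_mxKd eqxx freeU andbT.
by rewrite cardsCs setCK card_rV_sub // card_mx mul1n.
Qed.

Lemma prod_expn_sub (p n j : nat) : j <= n ->
  \prod_(t < j) (p ^ n - p ^ t) = \prod_(t < j) p ^ t * qprod p n j.
Proof.
move=> le_jn; rewrite -big_split; apply: eq_bigr => t _ /=.
by rewrite mulnBr muln1 -expnD subnKC // (leq_trans (ltnW (ltn_ord t))).
Qed.

Lemma card_bases (V : {vspace vT}) :
  #|[set A : 'M[F]_(\dim V, d) | row_free A && (mx2vs A == V)]| =
  #|[set C : 'M[F]_(\dim V) | row_free C]|.
Proof.
pose B := row_base (vs2mx V); have freeB : row_free B by rewrite /row_free eq_row_base.
have [B' BB'] := row_freeP freeB.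
have injB : injective (mulmx^~ B : 'M_(\dim V) -> 'M_(\dim V, d)).
  by apply: (can_inj (g := mulmx^~ B')) => C; rewrite -mulmxA BB' mulmx1.
rewrite -(card_imset _ injB); apply: eq_card => A; rewrite inE eq_mx2vs.
apply/andP/imsetP => [[freeA AV]|[C]]; last first.
  rewrite inE => freeC ->; rewrite /row_free mxrankMfree // (eqP freeC); split=> //.
  apply/eqmxP; apply: eqmx_trans (eqmxMfull _ _) (eq_row_base _).
  by rewrite row_full_unit -row_free_unit.
have AB : (A <= B)%MS by rewrite eq_row_base; case/andP: AV.
exists (A *m pinvmx B)%R; last by rewrite mulmxKpV.
by rewrite inE /row_free -(mxrankMfree _ freeB) mulmxKpV.
Qed.

Lemma card_dim_vspace_mul j : j <= d ->
  #|[set V : {vspace vT} | \dim V == j]| * qprod q j j = qprod q d j.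
Proof.
move=> le_jd; have q_gt0 : 0 < q by rewrite (ltn_trans _ (card_finNzRing_gt1 F)).
have : #|[set A : 'M[F]_(j, d) | row_free A]| =
       #|[set V : {vspace vT} | \dim V == j]| * #|[set C : 'M[F]_j | row_free C]|.
  rewrite -sum_nat_const -sum1_card.
  rewrite (partition_big (@mx2vs F vT j) [in [set V : {vspace vT} | \dim V == j]]) => [|A].
    apply: eq_bigr => V; rewrite inE => /eqP dimV; rewrite sum1dep_card -dimV -card_bases.
    by apply: eq_card => A; rewrite !inE.
  by rewrite !inE /dimv /= mxrank_gen.
rewrite !card_row_free // !prod_expn_sub // mulnCA => /eqP.
by rewrite eqn_pmul2l ?prodn_gt0 // => [/eqP|t]; rewrite ?expn_gt0 ?q_gt0.
Qed.

Lemma qprod_dvd_dim j : j <= d -> qprod q j j %| qprod q d j.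
Proof. by move=> le_jd; rewrite -(card_dim_vspace_mul le_jd) dvdn_mull. Qed.

Lemma card_dim_vspace j : j <= d -> #|[set V : {vspace vT} | \dim V == j]| = qbinom q d j.
Proof.
move=> le_jd; rewrite /qbinom -[X in X %/ _](card_dim_vspace_mul le_jd) mulnK //.
by apply: qprod_gt0 => //; apply: card_finNzRing_gt1.
Qed.

End CountingSubspaces.

Lemma property_pullback (F : finFieldType) (vT : vectType F) (T : family_property)
    (M : 'M[F]_(dim vT)) (G : {set {vspace vT}}) :
    lattice_invariant T -> hereditary T -> M \in unitmx ->
  T _ (@capv _ _) (@addv _ _) G ->
  T _ (@setI _) (@setU _) [set S | subbasis_span M S \in G].
Proof.
move=> T_inv T_her uM TG.
apply/(T_inv _ _ _ _ _ _ _ (setI_setU_lattice _) (capv_addv_lattice vT)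
  (subbasis_span_inj uM) (fun S S' => subbasis_spanI S S' uM) (subbasis_spanU M)).
apply: (T_her _ _ _ (capv_addv_lattice vT) G _ _ TG).
by apply/subsetP => _ /imsetP[S + ->]; rewrite inE.
Qed.

Local Unset Implicit Arguments.

Section MiddleLevels.

Variables (F : finFieldType) (vT : vectType F) (k : nat) (T : family_property).
Local Notation q := #|F|.
Local Notation d := (dim vT).
Local Notation GL := [set M : 'M[F]_d | M \in unitmx].
Local Notation lo := ((d + 2 - k)./2).
Hypotheses (k_range : 1 <= k <= d.+1) (T_inv : lattice_invariant T) (T_her : hereditary T).
Hypothesis T_bound :
  forall A : {set {set 'I_d}}, T _ (@setI _) (@setU _) A -> #|A| <= Sigma d k.

Definition middle_levels := [set V : {vspace vT} | lo <= \dim V < lo + k].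

Lemma sum_middle_levels (f : {vspace vT} -> nat) :
  \sum_(V in middle_levels) f V = \sum_(lo <= j < lo + k) \sum_(V | \dim V == j) f V.
Proof. by rewrite -sum_by_level; apply: eq_bigl => V; rewrite inE. Qed.

Lemma card_middle_levels : #|middle_levels| = Sigma_q q d k.
Proof.
rewrite -sum1_card sum_middle_levels /Sigma_q sum_middle_levels_index //.
apply: eq_big_nat => j /andP[_ lt_j]; rewrite sum1dep_card card_dim_vspace //.
by case/andP: k_range; lia.
Qed.

Lemma sum_nadapted_middle : \sum_(V in middle_levels) nadapted V = #|GL| * Sigma d k.
Proof.
rewrite sum_middle_levels /Sigma sum_middle_levels_index // big_distrr.
apply: eq_bigr => j _; rewrite -[RHS]/(#|GL| * 'C(d, j)) -sum_nadapted_dim.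
by apply: eq_bigl => V; rewrite inE.
Qed.

Lemma sum_nadapted_family (G : {set {vspace vT}}) :
  T _ (@capv _ _) (@addv _ _) G -> \sum_(V in G) nadapted V <= #|GL| * Sigma d k.
Proof.
move=> TG; rewrite sum_nadapted -sum_nat_const; apply: leq_sum => M; rewrite inE => uM.
by apply: T_bound; apply: property_pullback.
Qed.

Lemma nadapted_middle_le V U :
  V \in middle_levels -> U \notin middle_levels -> nadapted V <= nadapted U.
Proof.
rewrite !inE => midV midU.
have q_gt1 := card_finNzRing_gt1 F.
have le_Vd : \dim V <= d by apply: rank_leq_col.
have le_Ud : \dim U <= d by apply: rank_leq_col.
have le_minn : minn (\dim U) (d - \dim U) <= minn (\dim V) (d - \dim V).
  by case/andP: k_range; lia.
have dvd_qprod := @qprod_dvd_dim F vT.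
have cross := leq_binom_qbinom_minn q_gt1 dvd_qprod le_Ud le_Vd le_minn.
have NV := card_dim_nadapted V; have NU := card_dim_nadapted U.
rewrite card_dim_vspace // in NV; rewrite card_dim_vspace // in NU.
rewrite -(leq_pmul2l (qbinom_gt0 q_gt1 dvd_qprod le_Vd)).
rewrite -(leq_pmul2l (qbinom_gt0 q_gt1 dvd_qprod le_Ud)).
rewrite NV [X in _ <= X]mulnCA NU mulnCA [X in _ <= X]mulnCA leq_mul2l.
by rewrite mulnC [X in _ <= X]mulnC cross orbT.
Qed.

Theorem card_family_le (G : {set {vspace vT}}) :
  T _ (@capv _ _) (@addv _ _) G -> #|G| <= Sigma_q q d k.
Proof.
move=> TG; rewrite -card_middle_levels.
apply: (card_le_of_weighted_sum (@nadapted_gt0 F vT)).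
  by move=> V U midV; rewrite inE; apply: nadapted_middle_le.
by rewrite sum_nadapted_middle sum_nadapted_family.
Qed.

End MiddleLevels.

Theorem theorem1p3 (n k : nat) (F : finFieldType) (T : family_property) :
  1 <= n -> 1 <= k <= n.+1 ->
  lattice_invariant T -> hereditary T ->
  (forall A : {set {set 'I_n}}, T _ (@setI _) (@setU _) A -> #|A| <= Sigma n k) ->
  forall G : {set {vspace 'rV[F]_n}},
    T _ (@capv _ _) (@addv _ _) G -> #|G| <= Sigma_q #|F| n k.
Proof.
move=> _; have dim_rV : dim 'rV[F]_n = n by rewrite dim_matrix mul1r.
by move: (@card_family_le F 'rV[F]_n k T); rewrite dim_rV.
Qed.
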